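(* Let $n \geq 1$ and let $B$ be a log-product expression with $L(B) \subseteq P_n$. Then $|L(B)|\leq n! \cdot 4^{1-n} n^{\frac14 [ 3+\log n ]}$.
   Context: $P_n$ is the language of all permutations of the alphabet $\Sigma=\{1,\dots,n\}$, i.e. words of length $n$ in which each letter of $\Sigma$ occurs exactly once. Regular expressions (without star, without $\emptyset$) are built from $\epsilon$ and letters by union and concatenation. A homogeneous expression describes a language all of whose words have the same length, its degree $\deg R$. A homogeneous expression $B$ is log-product if it is a letter, or there are homogeneous expressions $B_1,B_2$ with $B_1$ log-product, $\deg B_1\ge\deg B_2$ and $B=B_1B_2$ or $B=B_2B_1$. Logarithms are base 2. *)

From Stdlib Require Import Reals.
From mathcomp Require Import all_boot.

Set Implicit Arguments.
Unset Strict Implicit.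
Unset Printing Implicit Defensive.

Inductive regexp : Type :=
  | Eps : regexp
  | Sym : nat -> regexp
  | Union : regexp -> regexp -> regexp
  | Concat : regexp -> regexp -> regexp.

(* The (finite) language of an expression, as a list of words
   (possibly with repetitions; the language is the set of its elements). *)
Fixpoint lang (r : regexp) : seq (seq nat) :=
  match r with
  | Eps => [:: [::]]
  | Sym a => [:: [:: a]]
  | Union r1 r2 => lang r1 ++ lang r2
  | Concat r1 r2 => [seq u ++ v | u <- lang r1, v <- lang r2]
  end.

Definition card_lang (r : regexp) : nat := size (undup (lang r)).

Definition homogeneous_of (r : regexp) (d : nat) : Prop :=
  forall w, w \in lang r -> size w = d.

Inductive log_product : regexp -> Prop :=
  | lp_sym : forall a, log_product (Sym a)
  | lp_concat_l : forall B1 B2 d1 d2,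
      log_product B1 -> homogeneous_of B1 d1 -> homogeneous_of B2 d2 ->
      (d2 <= d1)%N -> log_product (Concat B1 B2)
  | lp_concat_r : forall B1 B2 d1 d2,
      log_product B1 -> homogeneous_of B1 d1 -> homogeneous_of B2 d2 ->
      (d2 <= d1)%N -> log_product (Concat B2 B1).

Definition is_perm_word (n : nat) (w : seq nat) : bool := perm_eq w (iota 1 n).

Definition log2 (x : R) : R := Rdiv (ln x) (ln (IZR 2)).

From Stdlib Require Import Reals Lra Psatz.
From mathcomp Require Import all_boot zify.

Set Implicit Arguments.
Unset Strict Implicit.
Unset Printing Implicit Defensive.

(* If every word of [B1 B2] is a permutation of [s], then the words of [B1] are
   all permutations of one word [u0] and those of [B2] of one word [v0], so
   [|L(B1 B2)| <= |L(B1)| * |v0|!].  Writing [g n] ([perm_bound]) for the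
   claimed bound, an induction on [B] thus reduces the theorem to
   [g k * j! <= g (k + j)] for [j <= k].  With
   [Q n = n! * n ^ ((3 + log n) / 4)] ([fact_exp_phi]) this reads
   [Q k * j! * 4 ^ j <= Q (k + j)].  For [k = j] it is the central binomial
   estimate [4 ^ j <= 2 sqrt j * C(2j, j)]; and it persists as [k] grows
   because [Q (k + 1) / Q k] is nondecreasing in [k], which follows from the
   concavity of [ln]. *)

Lemma lang_inhabited r : exists w, w \in lang r.
Proof.
elim: r => [|a|r1 [w1 w1r1] r2 _|r1 [w1 w1r1] r2 [w2 w2r2]] /=.
- by exists [::]; rewrite inE.
- by exists [:: a]; rewrite inE.
- by exists w1; rewrite mem_cat w1r1.
- by exists (w1 ++ w2); apply: allpairs_f.
Qed.

Lemma card_lang_Concat r1 r2 :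
  card_lang (Concat r1 r2) <= card_lang r1 * card_lang r2.
Proof.
rewrite /card_lang /= -(size_allpairs cat).
apply: uniq_leq_size; first exact: undup_uniq.
move=> w; rewrite mem_undup => /allpairsP [[u v] [/= ur1 vr2 ->]].
by apply: allpairs_f; rewrite mem_undup.
Qed.

Definition perm_lang (r : regexp) (s : seq nat) : Prop :=
  uniq s /\ {in lang r, forall w, perm_eq w s}.

Lemma card_lang_perm r s : perm_lang r s -> card_lang r <= (size s)`!.
Proof.
move=> [us rs]; rewrite /card_lang -(size_permutations us).
apply: uniq_leq_size; first exact: undup_uniq.
by move=> w; rewrite mem_undup mem_permutations => /rs.
Qed.

Lemma perm_lang_Concat r1 r2 s : perm_lang (Concat r1 r2) s ->
  exists u0 v0, [/\ u0 \in lang r1, v0 \in lang r2, size s = size u0 + size v0,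
                    perm_lang r1 u0 & perm_lang r2 v0].
Proof.
move=> [us rs].
have [u0 u0r1] := lang_inhabited r1; have [v0 v0r2] := lang_inhabited r2.
have concat_perm u v : u \in lang r1 -> v \in lang r2 -> perm_eq (u ++ v) s.
  by move=> ur1 vr2; apply: rs; apply: allpairs_f.
have s_u0v0 := concat_perm _ _ u0r1 v0r2.
have := us; rewrite -(perm_uniq s_u0v0) cat_uniq => /and3P [uu0 _ uv0].
exists u0, v0; split=> //; first by rewrite -(perm_size s_u0v0) size_cat.
- split=> // u ur1; rewrite -(perm_cat2r v0).
  by rewrite (perm_trans (concat_perm _ _ ur1 v0r2)) // perm_sym.
- split=> // v vr2; rewrite -(perm_cat2l u0).
  by rewrite (perm_trans (concat_perm _ _ u0r1 vr2)) // perm_sym.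
Qed.

Lemma central_binomial_lower_bound j : 0 < j ->
  (4 ^ j * j`! ^ 2) ^ 2 <= 4 * j * (j + j)`! ^ 2.
Proof.
elim: j => [//|[_ _|j IH _]]; first by [].
set k := j.+1 in IH *.
have -> : (k.+1 + k.+1)`! = (k + k).+2 * (k + k).+1 * (k + k)`!.
  by rewrite addnS addSn !factS mulnA.
rewrite factS [4 ^ k.+1]expnS -(@leq_pmul2l k) //.
have := IH isT; move: (4 ^ k) (k`!) ((k + k)`!) => p f g le_pf_g.
have -> : k * (4 * p * (k.+1 * f) ^ 2) ^ 2 = 16 * k * k.+1 ^ 4 * (p * f ^ 2) ^ 2.
  by lia.
have -> : k * (4 * k.+1 * ((k + k).+2 * (k + k).+1 * g) ^ 2) =
          k.+1 * (k + k).+2 ^ 2 * (k + k).+1 ^ 2 * (4 * k * g ^ 2) by lia.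
apply: leq_mul le_pf_g.
have -> : k.+1 * (k + k).+2 ^ 2 * (k + k).+1 ^ 2 = 4 * k.+1 ^ 3 * (k + k).+1 ^ 2.
  by lia.
have -> : 16 * k * k.+1 ^ 4 = 4 * k.+1 ^ 3 * (4 * k * k.+1) by lia.
by rewrite leq_mul2l; apply/orP; right; lia.
Qed.

Lemma sqr_succ_le_pow16 k : 1 < k -> 8 * k.+1 ^ 2 <= 16 ^ k.
Proof.
elim: k => [//|[//|[_ _|k IH _]]]; first by [].
by rewrite [16 ^ _]expnS; move: (IH isT); nia.
Qed.

Open Scope R_scope.

Lemma INR_expn m n : INR (m ^ n)%N = INR m ^ n.
Proof. by elim: n => [|n IH] //=; rewrite expnS mult_INR IH. Qed.

Lemma ln_le x y : 0 < x -> x <= y -> ln x <= ln y.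
Proof. by move=> x0 [lt_xy|->]; [apply/Rlt_le/ln_increasing | lra]. Qed.

Lemma exp_le x y : x <= y -> exp x <= exp y.
Proof. by move=> [lt_xy|->]; [apply/Rlt_le/exp_increasing | lra]. Qed.

Lemma ln_sub_le p q : 0 < p -> 0 < q -> ln p - ln q <= p / q - 1.
Proof.
move=> p0 q0; have := exp_ineq1_le (ln p - ln q).
by rewrite exp_plus exp_Ropp !exp_ln //; rewrite /Rdiv; lra.
Qed.

Lemma ln_succ_sub_ge x : 0 < x -> 1 / (x + 2) <= ln (x + 2) - ln (x + 1).
Proof.
move=> x0; have := @ln_sub_le (x + 1) (x + 2) ltac:(lra) ltac:(lra).
have -> : (x + 1) / (x + 2) - 1 = - (1 / (x + 2)) by field; lra.
lra.
Qed.

Lemma ln_succ_concave x : 0 < x ->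
  (ln (x + 1) - ln x) - (ln (x + 2) - ln (x + 1)) <= 1 / (x * (x + 2)).
Proof.
move=> x0; have := @ln_sub_le ((x + 1) * (x + 1)) (x * (x + 2)) ltac:(nra) ltac:(nra).
rewrite !ln_mult; try lra.
have -> : (x + 1) * (x + 1) / (x * (x + 2)) - 1 = 1 / (x * (x + 2)) by field; lra.
lra.
Qed.

Lemma ln2_gt0 : 0 < ln 2.
Proof. have := ln_lt_2; lra. Qed.

Definition phi (x : R) : R := (3 + log2 x) / 4 * ln x.

(* With [l0, l1, l2] the logarithms of [x, x + 1, x + 2] and [c = ln 2],
   multiplying by [4 c] turns the inequality into the hypothesis. *)
Lemma phi_step_of_logs c l0 l1 l2 : 0 < c ->
  0 <= 4 * c * (l2 - l1) + (3 * c + 2 * l1) * ((l2 - l1) - (l1 - l0))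
       + (l1 - l0) ^ 2 + (l2 - l1) ^ 2 ->
  l1 + 2 * ((3 + l1 / c) / 4 * l1)
    <= l2 + (3 + l0 / c) / 4 * l0 + (3 + l2 / c) / 4 * l2.
Proof.
move=> c0 H; apply: (Rmult_le_reg_l (4 * c)); first lra.
have -> : 4 * c * (l2 + (3 + l0 / c) / 4 * l0 + (3 + l2 / c) / 4 * l2) =
          4 * c * l2 + 3 * c * l0 + l0 ^ 2 + 3 * c * l2 + l2 ^ 2 by field; lra.
have -> : 4 * c * (l1 + 2 * ((3 + l1 / c) / 4 * l1)) =
          4 * c * l1 + 6 * c * l1 + 2 * l1 ^ 2 by field; lra.
nra.
Qed.

Lemma phi_step_one : ln 2 + 2 * phi 2 <= ln 3 + phi 1 + phi 3.
Proof.
rewrite /phi /log2; apply: phi_step_of_logs; first exact: ln2_gt0.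
have ln3_ge : 3 * ln 2 <= 2 * ln 3.
  have -> : 3 * ln 2 = ln (2 ^ 3) by rewrite ln_pow; [simpl; ring | lra].
  have -> : 2 * ln 3 = ln (3 ^ 2) by rewrite ln_pow; [simpl; ring | lra].
  by apply: ln_le; simpl; lra.
rewrite ln_1; have := ln2_gt0; nra.
Qed.

(* Concavity of [ln] bounds the drop [(l1 - l0) - (l2 - l1)] by
   [1 / (x (x + 2))]; as [3 c + 2 l1 <= 4 x c], the middle term is then at
   least [- 4 c / (x + 2) >= - 4 c (l2 - l1)]. *)
Lemma phi_step x : 1 <= x -> 2 * ln (x + 1) <= (4 * x - 3) * ln 2 ->
  ln (x + 1) + 2 * phi (x + 1) <= ln (x + 2) + phi x + phi (x + 2).
Proof.
move=> x1 small_l1; rewrite /phi /log2.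
apply: phi_step_of_logs; first exact: ln2_gt0.
have x0 : 0 < x by lra.
have c0 := ln2_gt0.
have l1_ge0 : 0 <= ln (x + 1) by rewrite -ln_1; apply: ln_le; lra.
have v_ge0 : 0 <= 1 / (x * (x + 2)) by apply/Rlt_le/Rdiv_lt_0_compat; nra.
have drop_le := Rmult_le_compat_l (3 * ln 2 + 2 * ln (x + 1)) _ _
  ltac:(lra) (ln_succ_concave x0).
have factor_le : (3 * ln 2 + 2 * ln (x + 1)) * (1 / (x * (x + 2)))
                 <= 4 * ln 2 * (1 / (x + 2)).
  rewrite (_ : 4 * ln 2 * (1 / (x + 2)) = 4 * x * ln 2 * (1 / (x * (x + 2)))).
    by apply: Rmult_le_compat_r; lra.
  by field; lra.
have incr_le := Rmult_le_compat_l (4 * ln 2) _ _ ltac:(lra) (ln_succ_sub_ge x0).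
have := pow2_ge_0 (ln (x + 1) - ln x); have := pow2_ge_0 (ln (x + 2) - ln (x + 1)).
lra.
Qed.

Lemma twice_ln_succ_le k : (1 < k)%N -> 2 * ln (INR k + 1) <= (4 * INR k - 3) * ln 2.
Proof.
move=> k_gt1; have := le_INR _ _ (leP (sqr_succ_le_pow16 k_gt1)).
rewrite mult_INR !INR_expn (S_INR k).
have -> : INR 16 = 2 ^ 4 by simpl; ring.
have -> : INR 8 = 2 ^ 3 by simpl; ring.
rewrite -pow_mult => le_pow.
have k0 := pos_INR k.
have pos : 0 < 2 ^ 3 * (INR k + 1) ^ 2 by simpl; nra.
have := ln_le pos le_pow.
by rewrite ln_mult ?ln_pow ?mult_INR; simpl; nra.
Qed.

Definition rho (k : nat) : R := ln (INR k + 1) + phi (INR k + 1) - phi (INR k).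

Lemma rho_le_succ k : (0 < k)%N -> rho k <= rho k.+1.
Proof.
move=> k_gt0; rewrite /rho S_INR.
have -> : INR k + 1 + 1 = INR k + 2 by ring.
suff : ln (INR k + 1) + 2 * phi (INR k + 1)
         <= ln (INR k + 2) + phi (INR k) + phi (INR k + 2) by lra.
case: (ltnP 1 k) => [k_gt1|k_le1].
- apply: phi_step; last exact: twice_ln_succ_le.
  by apply: (le_INR 1); apply/leP.
- have -> : k = 1%N by lia.
  have -> : INR 1 + 1 = 2 by simpl; ring.
  have -> : INR 1 + 2 = 3 by simpl; ring.
  exact: phi_step_one.
Qed.

Lemma rho_le k n : (0 < k)%N -> (k <= n)%N -> rho k <= rho n.
Proof.
move=> k_gt0; elim: n => [|n IH] le_kn; first lia.
case: (ltnP k n.+1) => [lt_kn|le_nk].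
- by apply: Rle_trans (IH lt_kn) (@rho_le_succ n _); lia.
- have -> : k = n.+1 by lia.
  exact: Rle_refl.
Qed.

Lemma INR_fact_gt0 n : 0 < INR n`!.
Proof. exact/lt_0_INR/ltP/fact_gt0. Qed.

Definition fact_exp_phi (n : nat) : R := INR n`! * exp (phi (INR n)).

Lemma fact_exp_phi_gt0 n : 0 < fact_exp_phi n.
Proof. apply: Rmult_lt_0_compat; [exact: INR_fact_gt0 | exact: exp_pos]. Qed.

Lemma fact_exp_phiS k : fact_exp_phi k.+1 = exp (rho k) * fact_exp_phi k.
Proof.
rewrite /fact_exp_phi /rho factS mult_INR S_INR !exp_plus exp_Ropp exp_ln.
  by field; apply: Rgt_not_eq; apply: exp_pos.
by have := pos_INR k; lra.
Qed.

Lemma exp_phi_double j : (0 < j)%N ->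
  exp (phi (INR (j + j))) = 2 * sqrt (INR j) * exp (phi (INR j)).
Proof.
move=> j_gt0; have j0 : 0 < INR j by apply/lt_0_INR/ltP.
have c0 := ln2_gt0.
have -> : phi (INR (j + j)) = ln 2 + (/ 2 * ln (INR j) + phi (INR j)).
  rewrite plus_INR /phi /log2 (_ : INR j + INR j = 2 * INR j); last ring.
  by rewrite ln_mult; try lra; field; lra.
by rewrite -(Rpower_sqrt _ j0) /Rpower !exp_plus exp_ln; [ring | lra].
Qed.

Lemma fact_exp_phi_double j : (0 < j)%N ->
  fact_exp_phi j * INR j`! * 4 ^ j <= fact_exp_phi (j + j).
Proof.
move=> j_gt0; rewrite /fact_exp_phi exp_phi_double //.
have sq_le : (4 ^ j * INR j`! ^ 2) ^ 2 <= (2 * sqrt (INR j) * INR (j + j)`!) ^ 2.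
  have -> : (2 * sqrt (INR j) * INR (j + j)`!) ^ 2 = 4 * INR j * INR (j + j)`! ^ 2.
    by rewrite !Rpow_mult_distr pow2_sqrt; [ring | exact: pos_INR].
  have := le_INR _ _ (leP (central_binomial_lower_bound j_gt0)).
  by rewrite !mult_INR !INR_expn (_ : INR 4 = 4); [lra | simpl; ring].
have le : 4 ^ j * INR j`! ^ 2 <= 2 * sqrt (INR j) * INR (j + j)`!.
  apply: Rsqr_incr_0_var; first by rewrite !Rsqr_pow2.
  by apply/Rmult_le_pos/pos_INR/Rmult_le_pos/sqrt_pos; lra.
have := exp_pos (phi (INR j)); nra.
Qed.

Lemma fact_exp_phi_mul_fact j i : (0 < j)%N ->
  fact_exp_phi (j + i) * INR j`! * 4 ^ j <= fact_exp_phi (j + i + j).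
Proof.
move=> j_gt0; elim: i => [|i IH]; first by rewrite addn0; exact: fact_exp_phi_double.
rewrite addnS addSn !fact_exp_phiS.
have rho_exp_le : exp (rho (j + i)) <= exp (rho (j + i + j)).
  by apply/exp_le/rho_le; lia.
have := exp_pos (rho (j + i)); have := fact_exp_phi_gt0 (j + i + j).
have := INR_fact_gt0 j; have : 0 < 4 ^ j by apply: pow_lt; lra.
nra.
Qed.

Definition perm_bound (n : nat) : R :=
  INR n`! * Rpower 4 (1 - INR n) * Rpower (INR n) ((3 + log2 (INR n)) / 4).

Lemma perm_bound1 : perm_bound 1 = 1.
Proof.
rewrite /perm_bound /Rpower /= ln_1 Rminus_diag Rmult_0_r Rmult_0_l exp_0.
by rewrite Rmult_1_r Rmult_1_l.
Qed.

Lemma perm_boundE n : perm_bound n = Rpower 4 (1 - INR n) * fact_exp_phi n.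
Proof. by rewrite /perm_bound /fact_exp_phi /phi [Rpower (INR n) _]/Rpower; ring. Qed.

Lemma perm_bound_mul_fact k j : (j <= k)%N ->
  perm_bound k * INR j`! <= perm_bound (k + j).
Proof.
move=> le_jk; have [->|j_gt0] := posnP j; first by rewrite addn0 /= Rmult_1_r; lra.
have [i ->] : exists i, k = (j + i)%N by exists (k - j)%N; lia.
rewrite !perm_boundE.
have -> : Rpower 4 (1 - INR (j + i)) = Rpower 4 (1 - INR (j + i + j)) * 4 ^ j.
  by rewrite -Rpower_pow ?plus_INR -?Rpower_plus; [f_equal; ring | lra].
have := fact_exp_phi_mul_fact i j_gt0.
have : 0 < Rpower 4 (1 - INR (j + i + j)) by apply: exp_pos.
nra.
Qed.

Lemma INR_muln_le_perm_bound a b k j : INR a <= perm_bound k -> (b <= j`!)%N ->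
  (j <= k)%N -> INR (a * b) <= perm_bound (k + j).
Proof.
move=> le_a le_b le_jk; rewrite mult_INR.
apply: Rle_trans (perm_bound_mul_fact le_jk).
apply: Rmult_le_compat; [exact: pos_INR | exact: pos_INR | exact: le_a |].
exact/le_INR/leP.
Qed.

Lemma card_lang_le_perm_bound B s : log_product B -> perm_lang B s ->
  INR (card_lang B) <= perm_bound (size s).
Proof.
move=> lpB; elim: lpB s => [a|B1 B2 d1 d2 _ IH hom1 hom2 le_d|B1 B2 d1 d2 _ IH hom1 hom2 le_d]
  s Bs.
- have [_ /(_ [:: a] (mem_head _ _)) /perm_size <-] := Bs.
  by rewrite perm_bound1 /card_lang /=; lra.
- have [u0 [v0 [u0B1 v0B2 -> B1u0 B2v0]]] := perm_lang_Concat Bs.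
  apply: Rle_trans (le_INR _ _ (leP (card_lang_Concat B1 B2))) _.
  apply: INR_muln_le_perm_bound (IH _ B1u0) (card_lang_perm B2v0) _.
  by rewrite (hom1 _ u0B1) (hom2 _ v0B2).
- have [u0 [v0 [u0B2 v0B1 -> B2u0 B1v0]]] := perm_lang_Concat Bs.
  apply: Rle_trans (le_INR _ _ (leP (card_lang_Concat B2 B1))) _.
  rewrite mulnC addnC.
  apply: INR_muln_le_perm_bound (IH _ B1v0) (card_lang_perm B2u0) _.
  by rewrite (hom1 _ v0B1) (hom2 _ u0B2).
Qed.

Theorem lemma7p6 (n : nat) (B : regexp) :
  (1 <= n)%N ->
  log_product B ->
  (forall w, w \in lang B -> is_perm_word n w) ->
  Rle (INR (card_lang B))
      (Rmult (Rmult (INR (factorial n)) (Rpower (IZR 4) (Rminus (IZR 1) (INR n))))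
             (Rpower (INR n) (Rdiv (Rplus (IZR 3) (log2 (INR n))) (IZR 4)))).
Proof.
move=> _ lpB B_perm.
have := card_lang_le_perm_bound lpB (conj (iota_uniq 1 n) B_perm).
by rewrite size_iota.
Qed.
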